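(* Let $A$ be a finite set with $|A|\ge3$. The minimal u-closed monoids $M\le A^A$ are exactly the monoids of the form $M_f=\langle f\rangle\cup C$ where $f\in A^A\setminus T$ satisfies one of: (I) $f^2=f$; (II$'$) $f^2$ is a constant and $|A|\ge4$; (III$'$) $f^p=\mathrm{id}_A$ for some prime $p$, and $f$ has at least two fixed points or $f$ has at least two cycles of length $p$. In particular, every minimal u-closed monoid is $C$-minimal.
   Context: $C$ is the set of all constant unary maps on $A$, $T=\{\mathrm{id}_A\}\cup C$, and $\langle f\rangle$ is the submonoid of $A^A$ generated by $f$. A translation of an $n$-ary operation $g$ on $A$ is $x\mapsto g(a_1,\dots,a_{i-1},x,a_{i+1},\dots,a_n)$ with fixed $a_j\in A$; $\mathrm{trl}(g)$ is the set of translations ($\{g\}$ for unary $g$); $N^*:=\{g\mid\mathrm{trl}(g)\subseteq N\}$ for $N\subseteq A^A$. The u-closure $\overline M$ of $M\subseteq A^A$ is the intersection of all monoids $N$ with $M\subseteq N\le A^A$ such that $N^*$ is a clone; $M$ is u-closed if $\overline M=M$. A minimal u-closed monoid is a u-closed monoid $M\le A^A$ with $T\subsetneq M$ such that every u-closed monoid properly contained in $M$ equals $T$. A monoid $M\le A^A$ is $C$-minimal if $T\subsetneq M$ and there is no monoid $N$ with $T\subsetneq N\subsetneq M$. *)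

From mathcomp Require Import all_boot.
Set Implicit Arguments. Unset Strict Implicit. Unset Printing Implicit Defensive.

Section UClosed.
Variable A : finType.

Definition mset := (A -> A) -> Prop.

Definition subm (M N : mset) : Prop := forall f, M f -> N f.
Definition eqm (M N : mset) : Prop := forall f, M f <-> N f.
Definition psubm (M N : mset) : Prop := subm M N /\ exists f, N f /\ ~ M f.

Definition monoid (M : mset) : Prop :=
  M (fun x => x) /\ forall f g, M f -> M g -> M (f \o g).

Definition Cst : mset := fun f => exists a : A, f = (fun _ => a).
Definition Tset : mset := fun f => f = (fun x => x) \/ Cst f.

(* operations of positive arity n.+1 *)
Definition op (n : nat) := ('I_n.+1 -> A) -> A.

Definition trl n (g : op n) : mset :=
  fun h => exists (i : 'I_n.+1) (a : 'I_n.+1 -> A),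
    h = (fun x => g (fun j => if j == i then x else a j)).

Definition opset := forall n, op n -> Prop.

Definition star (N : mset) : opset := fun n g => subm (trl g) N.

Definition clone (F : opset) : Prop :=
  (forall n (i : 'I_n.+1), F n (fun x => x i)) /\
  (forall n m (f : op n) (gs : 'I_n.+1 -> op m),
     F n f -> (forall i, F m (gs i)) -> F m (fun x => f (fun i => gs i x))).

Definition uclosure (M : mset) : mset :=
  fun f => forall N : mset, monoid N -> subm M N -> clone (star N) -> N f.

Definition u_closed (M : mset) : Prop := eqm (uclosure M) M.

Definition minimal_u_closed (M : mset) : Prop :=
  monoid M /\ u_closed M /\ psubm Tset M /\
  forall N : mset, monoid N -> u_closed N -> psubm N M -> eqm N Tset.

Definition C_minimal (M : mset) : Prop :=
  monoid M /\ psubm Tset M /\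
  ~ exists N : mset, monoid N /\ psubm Tset N /\ psubm N M.

Definition Mf (f : A -> A) : mset :=
  fun g => (exists k : nat, g = iter k f) \/ Cst g.

Definition on_cycle (f : A -> A) (p : nat) (x : A) : Prop :=
  iter p f x = x /\ forall k, 0 < k < p -> iter k f x <> x.

Definition cond_I (f : A -> A) : Prop := f \o f = f.
Definition cond_II' (f : A -> A) : Prop := Cst (f \o f) /\ 4 <= #|A|.
Definition cond_III' (f : A -> A) : Prop :=
  exists p, prime p /\ iter p f = (fun x => x) /\
    ((exists x y, x <> y /\ f x = x /\ f y = y) \/
     (exists x y, on_cycle f p x /\ on_cycle f p y /\
                  forall k, iter k f x <> y)).

End UClosed.

(* A monoid [M] containing the constants is u-closed iff it is closed under
   diagonals: whenever all rows [K a] and all columns [K _ b] of a binary map [K]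
   lie in it, so does [x |-> K x x].  Indeed [M^*] is then a clone, because an
   n-ary composite can be assembled one argument at a time; conversely the
   diagonal of [K] is a composite of the binary operation [K] with projections.

   For [f] of type (I), (II') or (III') every row and column of [K] is a power of
   [f] or a constant, and their behaviour on the fixed points and the cycles of
   [f] forces the diagonal into [M_f].  Conversely, a diagonal-closed monoid
   containing the constants and some [g] outside [T] contains a power of [g]
   that is idempotent, squares to a constant, or has prime order [p].  The
   leftover configurations (|A| = 3, or a single p-cycle with at most one fixed
   point) are resolved by the diagonals [x |-> h^(m * i x) x], where [i x] is the
   position of [x] on the cycle: they yield an idempotent or, for [p >= 5], the
   reflection [i |-> -i], which has two 2-cycles.  Finally [M_f] is generated
   by the constants and any of its elements outside [T], which gives both
   minimality and C-minimality. *)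

From mathcomp Require Import all_boot zify.
From Stdlib Require Import FunctionalExtensionality PropExtensionality Classical.
Set Implicit Arguments. Unset Strict Implicit. Unset Printing Implicit Defensive.

Section UClosure.
Variable A : finType.

Definition diagonal_closed (S : mset A) : Prop :=
  forall K : A -> A -> A, (forall a, S (K a)) -> (forall b, S (fun x => K x b)) ->
    S (fun x => K x x).

Lemma eqm_eq (M N : mset A) : eqm M N -> M = N.
Proof.
by move=> E; apply: functional_extensionality => f; apply: propositional_extensionality.
Qed.

Lemma monoid_iter (M : mset A) h k : monoid M -> M h -> M (iter k h).
Proof. by case=> M1 Mcomp Mh; elim: k => [|k IH] //; apply: Mcomp. Qed.

Lemma Cst_eq (g : A -> A) x y : Cst g -> g x = g y.
Proof. by case=> a ->. Qed.

Section Default.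
(* [a0] only fills the vacuous remaining arguments of translations of unary
   operations. *)
Variable a0 : A.

(* Induction on the arity: the first argument of [F] is fed through the rows
   of a binary map, the remaining ones through its columns. *)
Lemma diagonal_closed_star_comp (S : mset A) : monoid S -> diagonal_closed S ->
  forall n (F : op A n), star S F ->
  forall hs : 'I_n.+1 -> A -> A, (forall i, S (hs i)) ->
  S (fun x => F (fun i => hs i x)).
Proof.
move=> [_ Scomp] Sdiag; elim=> [|n IH] F SF hs Shs.
  have -> : (fun x => F (fun i => hs i x)) =
            (fun y => F (fun j => if j == ord0 then y else a0)) \o hs ord0.
    apply: functional_extensionality => x /=; congr F.
    by apply: functional_extensionality => j; rewrite (ord1 j) eqxx.
  by apply: Scomp; [apply: SF; exists ord0, (fun _ => a0) | apply: Shs].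
have lift0F (j : 'I_n.+1) : (lift ord0 j == ord0) = false.
  by rewrite eq_sym (negbTE (neq_lift _ _)).
pose K s t := F (fun i => if i == ord0 then hs ord0 t else hs i s).
have -> : (fun x => F (fun i => hs i x)) = (fun x => K x x).
  apply: functional_extensionality => x; congr F.
  by apply: functional_extensionality => i; case: eqP => // ->.
apply: Sdiag => [s|t].
  have -> : K s =
      (fun y => F (fun j => if j == ord0 then y else hs j s)) \o hs ord0 by [].
  by apply: Scomp; [apply: SF; exists ord0, (fun j => hs j s) | apply: Shs].
pose F' : op A n := fun y =>
  F (fun i => if unlift ord0 i is Some j then y j else hs ord0 t).
have -> : (fun s => K s t) = (fun s => F' (fun j => hs (lift ord0 j) s)).
  apply: functional_extensionality => s; congr F.
  by apply: functional_extensionality => i; case: unliftP => [j ->|->];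
    rewrite ?lift0F ?eqxx.
apply: IH => [h [j [a ->]]|j]; last exact: Shs.
apply: SF; exists (lift ord0 j),
  (fun i => if unlift ord0 i is Some k then a k else hs ord0 t).
apply: functional_extensionality => x; congr F.
apply: functional_extensionality => i; case: unliftP => [k ->|->].
  by rewrite (inj_eq (@lift_inj _ ord0)).
by rewrite eq_sym lift0F.
Qed.

Lemma star_clone_of_diagonal_closed (S : mset A) :
  monoid S -> subm (@Cst A) S -> diagonal_closed S -> clone (star S).
Proof.
move=> SM SC Sdiag; split.
  move=> n i h [i0 [a ->]] /=.
  case: (i == i0); first by case: SM.
  by apply: SC; exists (a i).
move=> n m F gs SF Sgs h [i0 [a ->]] /=.
apply: (diagonal_closed_star_comp SM Sdiag SF
  (hs := fun i y => gs i (fun j => if j == i0 then y else a j))).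
by move=> i; apply: Sgs; exists i0, a.
Qed.

Lemma u_closed_of_diagonal_closed (S : mset A) :
  monoid S -> subm (@Cst A) S -> diagonal_closed S -> u_closed S.
Proof.
move=> SM SC Sdiag f; split => [Sf|Sf N _ SN _]; last exact: SN.
by apply: Sf => //; apply: star_clone_of_diagonal_closed.
Qed.

Lemma u_closed_diagonal_closed (M : mset A) : u_closed M -> diagonal_closed M.
Proof.
move=> Mu K Krow Kcol; apply/Mu => N [N_id _] MN [_ Ncomp].
pose F : op A 1 := fun v => K (v ord0) (v ord_max).
have NF : star N F.
  move=> h [i [a ->]]; apply: MN; rewrite /F.
  have [->|->] : i = ord0 \/ i = ord_max.
    by case: i => [[|[|k]] Hi] //; [left|right]; apply: val_inj.
  - exact: Kcol.
  - exact: Krow.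
pose pr : op A 0 := fun v => v ord0.
have Npr : star N pr by move=> h [i [a ->]]; rewrite /pr (ord1 i) eqxx.
by apply: (Ncomp 1 0 F (fun _ => pr) NF (fun _ => Npr)); exists ord0, (fun _ => a0).
Qed.

End Default.

Lemma u_closed_Cst (M : mset A) : u_closed M -> subm (@Cst A) M.
Proof.
move=> Mu h [a ->]; apply/Mu => N _ _ [Nproj _].
by apply: (Nproj 1 ord_max); exists ord0, (fun _ => a).
Qed.

End UClosure.

Section Mf.
Variable A : finType.
Implicit Types f g : A -> A.

Lemma Mf_iter f k : Mf f (iter k f).
Proof. by left; exists k. Qed.

Lemma Mf_Cst f : subm (@Cst A) (Mf f).
Proof. by move=> g Cg; right. Qed.

Lemma Tset_Mf f : subm (@Tset A) (Mf f).
Proof. by move=> g [->|Cg]; [left; exists 0|right]. Qed.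

Lemma Mf_monoid f : monoid (Mf f).
Proof.
split; first by left; exists 0.
move=> g h [[k ->]|[a ->]] [[l ->]|[b ->]].
- by left; exists (k + l); apply: functional_extensionality => x /=; rewrite iterD.
- by right; exists (iter k f b).
- by right; exists a.
- by right; exists a.
Qed.

Lemma Mf_sub f (N : mset A) : monoid N -> subm (@Cst A) N -> N f -> subm (Mf f) N.
Proof. by move=> NM NC Nf g [[k ->]|Cg]; [apply: monoid_iter|apply: NC]. Qed.

Lemma nonT_two_values g : ~ Tset g -> exists a b, g a <> g b.
Proof.
move=> Tg; apply: NNPP => g_const; apply: Tg.
case: (pickP (fun _ : A => true)) => [a _|A0].
  right; exists (g a); apply: functional_extensionality => x.
  by apply: NNPP => gx; apply: g_const; exists x, a.
by left; apply: functional_extensionality => x; have := A0 x.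
Qed.

Lemma Mf_const_of_moved_fixpoint f g u : Mf f g -> f u = u -> g u <> u -> Cst g.
Proof. by case=> [[k ->]|//] fu; rewrite iter_fix. Qed.

Section Diagonal.
Variables (f : A -> A) (K : A -> A -> A).
Hypothesis Krow : forall a, Mf f (K a).
Hypothesis Kcol : forall b, Mf f (fun x => K x b).

Lemma diagonal_const_of_moved_fixpoint u :
  f u = u -> K u u <> u -> Cst (fun x => K x x).
Proof.
move=> fu Du.
have Ku x : K u x = K u u := Cst_eq x u (Mf_const_of_moved_fixpoint (Krow u) fu Du).
exists (K u u); apply: functional_extensionality => x.
have Dx : K u x <> u by rewrite Ku.
by rewrite -(Ku x); apply: (Cst_eq x u (Mf_const_of_moved_fixpoint (Kcol x) fu Dx)).
Qed.

Lemma diagonal_at_fixpoint u x : f u = u -> K u u = u ->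
  K x x = u \/ exists k, K x x = iter k f x.
Proof.
move=> fu Du; case: (Kcol x) => [[k Ek]|Cx]; first by right; exists k; rewrite -Ek.
have -> : K x x = K u x := Cst_eq x u Cx.
case: (Krow u) => [[k ->]|Cu]; first by right; exists k.
by left; rewrite (Cst_eq x u Cu).
Qed.

Lemma diagonal_const_or_fixes_fixpoints :
  Cst (fun x => K x x) \/ forall w, f w = w -> K w w = w.
Proof.
case: (classic (exists w, f w = w /\ K w w <> w)) => [[w [fw Dw]]|K_fix].
  by left; apply: (diagonal_const_of_moved_fixpoint fw Dw).
by right => w fw; apply: NNPP => Dw; apply: K_fix; exists w.
Qed.

End Diagonal.

Lemma iter_idem f k : f \o f = f -> iter k.+1 f = f.
Proof.
move=> ff; elim: k => [|k IH] //; apply: functional_extensionality => x.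
by rewrite iterS IH; apply: (congr1 (fun g => g x) ff).
Qed.

Lemma sq_const_fixpoint f c : (forall x, f (f x) = c) -> f c = c.
Proof. by move=> fK; rewrite -[in RHS](fK (f c)) (fK c). Qed.

Lemma iter_sq_const f c k x : (forall x, f (f x) = c) -> iter k.+2 f x = c.
Proof.
move=> fK; elim: k => [|k IH]; first exact: fK.
by rewrite iterS IH (sq_const_fixpoint fK).
Qed.

Lemma Mf_trichotomy f g : f \o f = f \/ Cst (f \o f) -> Mf f g ->
  g = (fun x => x) \/ g = f \/ Cst g.
Proof.
move=> f_small [[[|k] ->]|Cg]; [by left| |by right; right].
case: f_small => [ff|[c fc]]; first by right; left; apply: iter_idem.
case: k => [|k]; first by right; left.
right; right; exists c; apply: functional_extensionality => x.
exact: (iter_sq_const _ _ (fun y => congr1 (fun g => g y) fc)).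
Qed.

Definition kind_on f g p q r s :=
  (g p = p /\ g q = q /\ g r = r /\ g s = s) \/
  (g p = f p /\ g q = f q /\ g r = f r /\ g s = f s) \/
  (exists d, g p = d /\ g q = d /\ g r = d /\ g s = d).

Lemma Mf_kind_on f g p q r s : f \o f = f \/ Cst (f \o f) -> Mf f g ->
  kind_on f g p q r s.
Proof.
move=> f_small /(Mf_trichotomy f_small) [->|[->|[d ->]]].
- by left.
- by right; left.
- by right; right; exists d.
Qed.

End Mf.

Ltac kind_cases H :=
  destruct H as [[? [? [? ?]]]|[[? [? [? ?]]]|[? [? [? [? ?]]]]]]; try congruence.

Section Idempotent.
Variables (A : finType) (f : A -> A).
Hypothesis ff : f \o f = f.

Let f_small : f \o f = f \/ Cst (f \o f) := or_introl ff.

Lemma idem_diagonal_uniform (K : A -> A -> A) x y :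
  (forall a, Mf f (K a)) -> (forall b, Mf f (fun x => K x b)) ->
  K x x = x -> x <> f x -> K y y = f y -> y <> f y -> False.
Proof.
move=> Krow Kcol Dx nx Dy ny.
have fx : f (f x) = f x := congr1 (fun g => g x) ff.
have fy : f (f y) = f y := congr1 (fun g => g y) ff.
have R := Mf_kind_on x y y y f_small (Krow x).
have C := Mf_kind_on y x y y f_small (Kcol y); simpl in C.
kind_cases R; kind_cases C.
Qed.

Lemma diagonal_closed_idem : ~ Tset f -> diagonal_closed (Mf f).
Proof.
move=> Tf K Krow Kcol.
have fK x : f (f x) = f x := congr1 (fun g => g x) ff.
have [|K_fix] := diagonal_const_or_fixes_fixpoints Krow Kcol; first by right.
have [a [b fab]] := nonT_two_values Tf.
have Dx x : K x x = x \/ K x x = f x.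
  have iter_kinds k : iter k f x = x \/ iter k f x = f x.
    by case: k => [|k]; [left|right; rewrite iter_idem].
  have [Ea|[k ->]] := diagonal_at_fixpoint Krow Kcol x (fK a) (K_fix _ (fK a));
    last exact: iter_kinds.
  have [Eb|[k ->]] := diagonal_at_fixpoint Krow Kcol x (fK b) (K_fix _ (fK b));
    last exact: iter_kinds.
  by case: fab; rewrite -Ea -Eb.
case: (classic (forall x, K x x = x)) => [Kid|/not_all_ex_not [y ny]].
  by left; exists 0; apply: functional_extensionality.
have Dy : K y y = f y by case: (Dx y).
have nyf : y <> f y by congruence.
left; exists 1; apply: functional_extensionality => x /=.
case: (Dx x) => // Dx'; case: (classic (x = f x)) => [|nx]; first by congruence.
by case: (idem_diagonal_uniform Krow Kcol Dx' nx Dy nyf).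
Qed.

End Idempotent.

Section SqConst.
Variables (A : finType) (f : A -> A) (c : A).
Hypothesis fK : forall x, f (f x) = c.
Variable K : A -> A -> A.
Hypothesis Krow : forall a, Mf f (K a).
Hypothesis Kcol : forall b, Mf f (fun x => K x b).

Let f_small : f \o f = f \/ Cst (f \o f).
Proof. by right; exists c; apply: functional_extensionality. Qed.

Lemma sq_const_diagonal_f_uniform x y :
  K x x = f x -> f x <> c -> K y y = c -> f y <> c -> False.
Proof.
move=> *; have fx := fK x; have fy := fK y.
have R1 := Mf_kind_on x y y y f_small (Krow x).
have C1 := Mf_kind_on x y y y f_small (Kcol y); simpl in C1.
have R2 := Mf_kind_on x y y y f_small (Krow y).
have C2 := Mf_kind_on x y y y f_small (Kcol x); simpl in C2.
kind_cases R1; kind_cases C1; kind_cases R2; kind_cases C2.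
Qed.

Lemma sq_const_diagonal_fix_uniform x y z :
  x <> c -> K x x = x -> y <> c -> K y y <> y ->
  K c c = c -> K y y = c \/ K y y = f y -> z <> x -> z <> y -> z <> c ->
  K z z = c \/ K z z = z \/ K z z = f z -> False.
Proof.
move=> nxc Dx nyc Dy Dc Py nzx nzy nzc Pz.
have fx := fK x; have fy := fK y; have fz := fK z.
have R1 := Mf_kind_on x y z c f_small (Krow x).
have C1 := Mf_kind_on x y z c f_small (Kcol x); simpl in C1.
have R2 := Mf_kind_on x y z c f_small (Krow y).
have C2 := Mf_kind_on x y z c f_small (Kcol y); simpl in C2.
have R3 := Mf_kind_on x y z c f_small (Krow z).
have C3 := Mf_kind_on x y z c f_small (Kcol z); simpl in C3.
have R4 := Mf_kind_on x y z c f_small (Krow c).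
have C4 := Mf_kind_on x y z c f_small (Kcol c); simpl in C4.
kind_cases R1; kind_cases C1; kind_cases R2; kind_cases C2; kind_cases C4;
  kind_cases R4; kind_cases R3; kind_cases C3;
  case: Py => ?; try congruence; case: Pz => [?|[?|?]]; congruence.
Qed.

End SqConst.

Lemma exists_fourth (A : finType) (x y c : A) : 3 < #|A| ->
  exists z, z <> x /\ z <> y /\ z <> c.
Proof.
move=> A4; apply: NNPP => no_z.
have : #|A| <= size [:: x; y; c].
  apply: leq_trans (card_size _); apply: subset_leq_card; apply/subsetP => z _.
  case: (boolP (z \in [:: x; y; c])) => // zxyc; case: no_z; exists z.
  by split; [|split] => E; move: zxyc; rewrite E !inE eqxx ?orbT.
by rewrite leqNgt A4.
Qed.

Lemma diagonal_closed_sq_const (A : finType) (f : A -> A) :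
  cond_II' f -> diagonal_closed (Mf f).
Proof.
move=> [[c fc2] A4] K Krow Kcol.
have fK x : f (f x) = c := congr1 (fun g => g x) fc2.
have fc := sq_const_fixpoint fK.
have [Dc|Dc] := classic (K c c = c); last first.
  by right; apply: (diagonal_const_of_moved_fixpoint Krow Kcol fc Dc).
have Dx x : K x x = c \/ K x x = x \/ K x x = f x.
  have [|[[|[|k]] ->]] := diagonal_at_fixpoint Krow Kcol x fc Dc.
  - by left.
  - by right; left.
  - by right; right.
  - by left; apply: iter_sq_const.
have fix_uniform := sq_const_diagonal_fix_uniform fK Krow Kcol.
have f_uniform := sq_const_diagonal_f_uniform fK Krow Kcol.
case: (classic (exists x, x <> c /\ K x x = x)) => [[x [nxc Dx']]|no_fix].
  left; exists 0; apply: functional_extensionality => y /=.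
  apply: NNPP => ny; have nyc : y <> c by move=> E; apply: ny; rewrite E.
  have [z [nzx [nzy nzc]]] := exists_fourth x y c A4.
  have Py : K y y = c \/ K y y = f y by case: (Dx y) => [|[|]]; auto.
  exact: (fix_uniform x y z nxc Dx' nyc ny Dc Py nzx nzy nzc (Dx z)).
case: (classic (exists x, K x x = f x /\ f x <> c)) => [[x [Dx' fx]]|no_f'].
  left; exists 1; apply: functional_extensionality => y /=.
  apply: NNPP => ny; case: (Dx y) => [Dy|[Dy|Dy]] //.
    case: (classic (f y = c)) => [fy|fy]; first by apply: ny; rewrite Dy fy.
    exact: (f_uniform x y Dx' fx Dy fy).
  case: (classic (y = c)) => [E|nyc]; first by apply: ny; rewrite Dy E fc.
  by apply: no_fix; exists y.
right; exists c; apply: functional_extensionality => x /=.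
case: (Dx x) => [|[Dx'|Dx']] //.
  case: (classic (x = c)) => [E|nxc]; first by rewrite E Dc.
  by case: no_fix; exists x.
case: (classic (f x = c)) => [E|nfx]; first by rewrite Dx' E.
by case: no_f'; exists x.
Qed.

Definition in_orbit (A : finType) (f : A -> A) x y := exists k, iter k f x = y.

Section PrimeOrder.
Variables (A : finType) (f : A -> A) (p : nat).
Hypothesis p_prime : prime p.
Hypothesis fp : forall x, iter p f x = x.

Let p_gt0 : 0 < p := prime_gt0 p_prime.

Lemma iter_mul_order n x : iter (n * p) f x = x.
Proof. by rewrite iterM; apply: iter_fix; apply: fp. Qed.

Lemma iter_mod_order n x : iter n f x = iter (n %% p) f x.
Proof. by rewrite {1}(divn_eq n p) addnC iterD iter_mul_order. Qed.

Lemma iter_inverse a x : iter (p.-1 * a) f (iter a f x) = x.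
Proof.
by rewrite -iterD -{2}(mul1n a) -mulnDl addn1 prednK // mulnC iter_mul_order.
Qed.

Lemma iter_order_inj n : injective (iter n f).
Proof. by move=> x y E; rewrite -(iter_inverse n x) -(iter_inverse n y) E. Qed.

Lemma iter_coprime_order k : ~~ (p %| k) -> exists u, forall x, iter (u * k) f x = f x.
Proof.
move=> pk; have k_gt0 : 0 < k by case: k pk => //; rewrite dvdn0.
have cop : coprime k p by rewrite coprime_sym prime_coprime.
have [[u v] /= uv] := coprimeP _ k_gt0 cop.
have E : u * k = 1 + v * p.
  have : 0 < u * k - v * p by rewrite uv.
  by rewrite subn_gt0 => /ltnW le_vu; rewrite -(subnK le_vu) uv.
by exists u => x; rewrite E iterD iter_mul_order.
Qed.

Lemma order_dvd_of_moved x k : f x <> x -> iter k f x = x -> p %| k.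
Proof.
move=> fx xk; apply: contraT => /iter_coprime_order [u Eu].
by case: fx; rewrite -Eu iterM iter_fix.
Qed.

Lemma on_cycle_of_moved x : f x <> x -> on_cycle f p x.
Proof.
move=> fx; split=> // k /andP [k_gt0 k_lt_p] /(order_dvd_of_moved fx) /(dvdn_leq k_gt0).
by rewrite leqNgt k_lt_p.
Qed.

Lemma nonT_of_moved x : f x <> x -> ~ Tset f.
Proof.
move=> fx [E|[d E]]; first by rewrite E in fx.
apply: fx; rewrite -{2}(fp x) -(prednK p_gt0) iterS.
by rewrite (congr1 (fun g => g x) E) (congr1 (fun g => g (iter p.-1 f x)) E).
Qed.

(* Every nontrivial cycle has length [p], so equal iterates at one moved point
   are equal everywhere. *)
Lemma iter_eq_of_moved x a b : f x <> x -> iter a f x = iter b f x ->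
  forall z, iter a f z = iter b f z.
Proof.
move=> fx; wlog le_ab : a b / a <= b.
  by move=> W E; case: (leqP a b) => [|/ltnW] le; [apply: W|symmetry; apply: W].
move=> E z; have fy : f (iter a f x) <> iter a f x.
  by move=> fy; apply: fx; have := iter_inverse a x; rewrite (iter_fix _ fy) => <-.
have /dvdnP [q q_ab] : p %| b - a.
  by apply: (order_dvd_of_moved fy); rewrite -iterD subnK.
by rewrite -(subnK le_ab) iterD q_ab iter_mul_order.
Qed.

Lemma in_orbit_of_iter_eq x y a b : iter a f x = iter b f y -> in_orbit f y x.
Proof. by move=> E; exists (p.-1 * a + b); rewrite iterD -E iter_inverse. Qed.

Lemma in_orbit_sym x y : in_orbit f x y -> in_orbit f y x.
Proof. by move=> [k E]; apply: (@in_orbit_of_iter_eq _ _ k 0); rewrite E. Qed.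

End PrimeOrder.

Lemma in_orbit_refl (A : finType) (f : A -> A) x : in_orbit f x x.
Proof. by exists 0. Qed.

Lemma in_orbit_trans (A : finType) (f : A -> A) x y z :
  in_orbit f x y -> in_orbit f y z -> in_orbit f x z.
Proof. by move=> [k E] [l F]; exists (l + k); rewrite iterD E. Qed.

Section DiagonalPrimeOrder.
Variables (A : finType) (f : A -> A) (p : nat).
Hypothesis p_prime : prime p.
Hypothesis fp : forall x, iter p f x = x.
Variable K : A -> A -> A.
Hypothesis Krow : forall a, Mf f (K a).
Hypothesis Kcol : forall b, Mf f (fun x => K x b).

Let f_inj := iter_order_inj p_prime fp.
Let orbit_sym := in_orbit_sym p_prime fp.

Lemma diagonal_off_orbit x y : ~ in_orbit f x y ->
  K x x = K y y \/ exists e, K x x = iter e f x /\ K y y = iter e f y.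
Proof.
move=> nxy; case: (Kcol x) (Krow y) => [[a Ea]|Cx] [[b Eb]|Cy].
- case: nxy; apply: (in_orbit_of_iter_eq p_prime fp (a := a) (b := b)).
  by rewrite -Ea -Eb.
- by right; exists a; rewrite -Ea (Cst_eq y x Cy).
- by right; exists b; rewrite -Eb -(Cst_eq y x Cx).
- by left; move: (Cst_eq y x Cx) (Cst_eq x y Cy) => /= -> ->.
Qed.

Lemma diagonal_off_orbit_moved z t e : ~ in_orbit f z t -> f t <> t ->
  K t t = iter e f t -> K z z = iter e f t \/ K z z = iter e f z.
Proof.
move=> nzt ft Dt; case: (diagonal_off_orbit nzt) => [->|[e' [-> E]]]; first by left.
right; apply: (iter_eq_of_moved p_prime fp ft); by rewrite -E.
Qed.

Lemma diagonal_iter_on_orbit s t e z : f s <> s -> f t <> t -> ~ in_orbit f s t ->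
  K s s = iter e f s -> K t t = iter e f t -> in_orbit f z s -> K z z = iter e f z.
Proof.
move=> fs ft nst Ds Dt zs.
have nzt : ~ in_orbit f z t by move=> zt; apply/nst/(in_orbit_trans (orbit_sym zs)).
have [Dz|//] := diagonal_off_orbit_moved nzt ft Dt; exfalso.
have nzt' : ~ in_orbit f z (f t).
  by move=> zt; apply/nzt/(in_orbit_trans zt)/orbit_sym; exists 1.
have Dt' : K (f t) (f t) = iter e f t.
  case: (diagonal_off_orbit nzt') => [<-//|[e1 [E1 _]]].
  by case: nzt; apply/orbit_sym/(in_orbit_of_iter_eq p_prime fp (a := e1) (b := e));
    rewrite -E1.
have nts : ~ in_orbit f (f t) s.
  by move=> ts; apply/nst/orbit_sym/(in_orbit_trans _ ts); exists 1.
case: (diagonal_off_orbit nts) => [E|[e2 [E1 E2]]].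
  have /f_inj ts : iter e f t = iter e f s by rewrite -Dt' E Ds.
  by apply: nst; rewrite ts; apply: in_orbit_refl.
have : iter e2 f (f t) = iter e f (f t).
  by apply: (iter_eq_of_moved p_prime fp fs); rewrite -E2 Ds.
by rewrite -E1 Dt' => /f_inj ft'; apply: ft; rewrite -ft'.
Qed.

Lemma diagonal_iter_of_two_fixpoints u v : u <> v -> f u = u -> f v = v ->
  (forall w, f w = w -> K w w = w) -> exists m, (fun x => K x x) = iter m f.
Proof.
move=> nuv fu fv K_fix.
suff [m Km] : exists m, forall x, f x <> x -> K x x = iter m f x.
  exists m; apply: functional_extensionality => x.
  by case: (classic (f x = x)) => [fx|/Km//]; rewrite K_fix // iter_fix.
case: (Kcol u) => [[m Em]|Cu].
  exists m => x fx; case: (Krow x) => [[k Ek]|Cx].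
    have /f_inj xu : iter m f x = iter m f u.
      by rewrite (iter_fix m fu) -Em /= Ek (iter_fix k fu).
    by case: fx; rewrite xu.
  by rewrite (Cst_eq x u Cx) -Em.
case: (Krow v) => [[m Em]|Cv].
  exists m => x fx; case: (Kcol x) => [[k Ek]|Cx].
    have /f_inj xv : iter m f x = iter m f v.
      by rewrite (iter_fix m fv) -Em -[RHS](iter_fix k fv) -Ek.
    by case: fx; rewrite xv.
  by rewrite (Cst_eq x v Cx) /= Em.
case: nuv; rewrite -(K_fix _ fu) -(K_fix _ fv).
by move: (Cst_eq u v Cu) (Cst_eq u v Cv) => /= -> ->.
Qed.

Lemma diagonal_iter_of_separated s t : f s <> s -> f t <> t -> ~ in_orbit f s t ->
  K s s <> K t t -> exists e, (fun x => K x x) = iter e f.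
Proof.
move=> fs ft nst Dst; have [//|[e [Ds Dt]]] := diagonal_off_orbit nst.
exists e; apply: functional_extensionality => z.
have [zs|nzs] := classic (in_orbit f z s).
  exact: (diagonal_iter_on_orbit fs ft nst Ds Dt zs).
have [zt|nzt] := classic (in_orbit f z t).
  by apply: (diagonal_iter_on_orbit ft fs _ Dt Ds zt) => /orbit_sym.
have [Dz|//] := diagonal_off_orbit_moved nzt ft Dt.
have [Dz'|//] := diagonal_off_orbit_moved nzs fs Ds.
have /f_inj st : iter e f s = iter e f t by rewrite -Dz -Dz'.
by case: nst; rewrite st; apply: in_orbit_refl.
Qed.

Lemma diagonal_const_of_unseparated x y : f x <> x -> f y <> y -> ~ in_orbit f x y ->
  (forall s t, f s <> s -> f t <> t -> ~ in_orbit f s t -> K s s = K t t) ->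
  Cst (fun z => K z z).
Proof.
move=> fx fy nxy K_eq; exists (K x x); apply: functional_extensionality => z.
have [fz|nz] := classic (f z = z); last first.
  have [zx|nzx] := classic (in_orbit f z x); last exact: K_eq.
  have nzy : ~ in_orbit f z y by move=> zy; apply/nxy/(in_orbit_trans (orbit_sym zx)).
  by rewrite (K_eq _ _ nz fy nzy) (K_eq _ _ fx fy nxy).
have fixed_orbit w : f w <> w -> ~ in_orbit f z w.
  by move=> fw [k zw]; apply: fw; rewrite -zw !iter_fix.
rewrite (K_eq _ _ fx fy nxy).
have [->|[e [_ Ex]]] := diagonal_off_orbit (fixed_orbit _ fx); first exact: K_eq.
have [->//|[e' [_ Ey]]] := diagonal_off_orbit (fixed_orbit _ fy).
exfalso; apply: (nxy).
apply/orbit_sym/(in_orbit_of_iter_eq p_prime fp (a := e) (b := e')).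
by rewrite -Ex -Ey (K_eq _ _ fx fy nxy).
Qed.

End DiagonalPrimeOrder.

Lemma diagonal_closed_prime_order (A : finType) (f : A -> A) : cond_III' f ->
  diagonal_closed (Mf f).
Proof.
move=> [p [p_prime [fp1 fix_or_cyc]]] K Krow Kcol.
have fp z : iter p f z = z by rewrite fp1.
case: fix_or_cyc => [[x [y [nxy [fx fy]]]]|[x [y [[_ cx] [[_ cy] nxy]]]]].
  have [|K_fix] := diagonal_const_or_fixes_fixpoints Krow Kcol; first by right.
  have [m ->] := diagonal_iter_of_two_fixpoints p_prime fp Krow Kcol nxy fx fy K_fix.
  exact: Mf_iter.
have fx : f x <> x := cx 1 (prime_gt1 p_prime).
have fy : f y <> y := cy 1 (prime_gt1 p_prime).
have nxy' : ~ in_orbit f x y by case=> k; apply: nxy.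
have [[s [t [fs ft nst Dst]]]|unsep] := classic (exists s t,
    [/\ f s <> s, f t <> t, ~ in_orbit f s t & K s s <> K t t]).
  have [e ->] := diagonal_iter_of_separated p_prime fp Krow Kcol fs ft nst Dst.
  exact: Mf_iter.
right; apply: (diagonal_const_of_unseparated p_prime fp Krow Kcol fx fy nxy').
by move=> s t fs ft nst; apply: NNPP => Dst; apply: unsep; exists s, t.
Qed.

Section Good.
Variable A : finType.

Definition good (f : A -> A) := cond_I f \/ cond_II' f \/ cond_III' f.

Lemma diagonal_closed_good f : good f -> ~ Tset f -> diagonal_closed (Mf f).
Proof.
case=> [I|[II|III]] Tf.
- exact: diagonal_closed_idem.
- exact: diagonal_closed_sq_const.
- exact: diagonal_closed_prime_order.
Qed.

Lemma u_closed_good f : good f -> ~ Tset f -> u_closed (Mf f).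
Proof.
move=> good_f Tf; have [a _] := nonT_two_values Tf.
apply: (u_closed_of_diagonal_closed a (Mf_monoid f) (@Mf_Cst _ f)).
exact: diagonal_closed_good.
Qed.

Lemma good_iter_of_Mf f g : good f -> Mf f g -> ~ Tset g -> exists k, f = iter k g.
Proof.
move=> good_f Mg Tg.
have [I_or_II|[p [p_prime [fp _]]]] : (f \o f = f \/ Cst (f \o f)) \/ cond_III' f.
  by case: good_f => [|[[]|]]; auto.
  case: (Mf_trichotomy I_or_II Mg) => [gid|[->|Cg]].
  - by case: Tg; left.
  - by exists 1.
  - by case: Tg; right.
case: Mg => [[k Ek]|Cg]; last by case: Tg; right.
have fp' x : iter p f x = x by rewrite fp.
have [pk|/(iter_coprime_order p_prime fp') [u Eu]] := boolP (p %| k).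
  case: Tg; left; rewrite Ek; apply: functional_extensionality => x.
  by move: pk => /dvdnP [q ->]; rewrite iter_mul_order.
by exists u; rewrite Ek; apply: functional_extensionality => x; rewrite -iterM Eu.
Qed.

End Good.

Lemma exists_idempotent_iter (A : finType) (g : A -> A) :
  exists k, 0 < k /\ forall x, iter k g (iter k g x) = iter k g x.
Proof.
pose F (i : 'I_#|{ffun A -> A}|.+1) := [ffun x => iter i g x].
have [i [j [nij Fij]]] : exists i j, i <> j /\ F i = F j.
  apply: NNPP => F_inj; have /leq_card : injective F.
    by move=> i j Fij; apply: NNPP => nij; apply: F_inj; exists i, j.
  by rewrite card_ord ltnn.
have {}Fij : forall x, iter i g x = iter j g x.
  by move=> x; have := congr1 (fun h : {ffun A -> A} => h x) Fij; rewrite !ffunE.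
wlog lt_ij : i j nij Fij / i < j.
  move=> W; case: (ltngtP i j) => [|lt_ji|/val_inj//]; first exact: W.
  by apply: (W j i (nesym nij)) => // x; rewrite Fij.
pose d := j - i; have d_gt0 : 0 < d by rewrite subn_gt0.
have step t x : i <= t -> iter (t + d) g x = iter t g x.
  move=> le_it; rewrite -(subnK le_it) -addnA iterD /d (addnC i) subnK ?(ltnW lt_ij) //.
  by rewrite -Fij -iterD.
have period t m x : i <= t -> iter (t + m * d) g x = iter t g x.
  move=> le_it; elim: m => [|m IH]; first by rewrite addn0.
  by rewrite mulSn addnCA addnC step // (leq_trans le_it (leq_addr _ _)).
exists (d * i.+1); split; first by rewrite muln_gt0 d_gt0.
move=> x; rewrite -iterD {2}mulnC period //.
by apply: leq_trans (leqnSn i) _; rewrite -{1}(mul1n i.+1) leq_mul2r d_gt0 orbT.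
Qed.

Lemma card_le3_cover (A : finType) (a b c : A) : #|A| <= 3 ->
  a <> b -> a <> c -> b <> c -> forall x, x = a \/ x = b \/ x = c.
Proof.
move=> A3 nab nac nbc x; apply: NNPP => nx.
have : uniq [:: x; a; b; c].
  rewrite /= !inE !negb_or; repeat (apply/andP; split) => //; apply/eqP => E;
  by [apply: nx; left|apply: nx; right; left|apply: nx; right; right|
      apply: nab|apply: nac|apply: nbc].
move/card_uniqP; have := max_card (mem [:: x; a; b; c]).
by move=> /[swap] -> /leq_trans/(_ A3).
Qed.

Section GoodElements.
Variables (A : finType) (M : mset A).
Hypotheses (M_monoid : monoid M) (M_Cst : subm (@Cst A) M).
Hypothesis M_diagonal : diagonal_closed M.

Definition contains_good := exists e, M e /\ ~ Tset e /\ good e.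

(* The diagonal of the map whose rows are [id], [s] and the constant [c] at
   [a], [b] and [c] is the idempotent a |-> a, b |-> s b, c |-> c. *)
Lemma idempotent_of_three_points a b c s : a <> b -> a <> c -> b <> c ->
  (forall x, x = a \/ x = b \/ x = c) ->
  M s -> s a = b -> s c = c -> s b = a \/ s b = c -> contains_good.
Proof.
move=> nab nac nbc cover Ms sab scc sb.
have M_id : M (fun x => x) by case: M_monoid.
pose K x y := if x == a then y else if x == b then s y else c.
have Ka y : K a y = y by rewrite /K eqxx.
have Kb y : K b y = s y by rewrite /K (introF eqP (nesym nab)) eqxx.
have Kc y : K c y = c by rewrite /K (introF eqP (nesym nac)) (introF eqP (nesym nbc)).
exists (fun x => K x x); split; last split; last first.
  left; apply: functional_extensionality => x /=.
  case: (cover x) => [->|[->|->]]; rewrite ?Ka ?Kb ?Kc //.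
  by case: sb => ->; rewrite ?Ka ?Kc.
- case=> [E|[d E]].
    have := congr1 (fun g => g b) E => /=; rewrite Kb.
    by case: sb => -> E'; [apply: nab|apply: nbc].
  have := congr1 (fun g => g a) E; have := congr1 (fun g => g c) E => /=.
  by rewrite Ka Kc => <-; exact: nac.
apply: M_diagonal => [x|y].
  case: (cover x) => [->|[->|->]].
  - by have -> : K a = (fun y => y) by apply: functional_extensionality.
  - by have -> : K b = s by apply: functional_extensionality.
  - by apply: M_Cst; exists c; apply: functional_extensionality.
case: (cover y) => [->|[->|->]].
- have -> : (fun x => K x a) = (fun x => x); last by [].
  apply: functional_extensionality => x.
  by case: (cover x) => [->|[->|->]]; rewrite ?Ka ?Kb ?Kc.
- have -> : (fun x => K x b) = s; last by [].
  apply: functional_extensionality => x.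
  by case: (cover x) => [->|[->|->]]; rewrite ?Ka ?Kb ?Kc.
- apply: M_Cst; exists c; apply: functional_extensionality => x.
  by case: (cover x) => [->|[->|->]]; rewrite ?Ka ?Kb ?Kc.
Qed.

End GoodElements.

Lemma nonT_sq_const_iter (A : finType) (g : A -> A) k a : ~ Tset g ->
  (forall x, iter k g x = a) ->
  exists m, ~ Tset (iter m g) /\ exists c, forall x, iter m g (iter m g x) = c.
Proof.
move=> Tg g_nil.
pose P n := [exists a, [forall x, iter n g x == a]].
have P_k : exists n, P n.
  by exists k; apply/existsP; exists a; apply/forallP => x; rewrite g_nil.
have [k1 /existsP [a1 /forallP k1_const] k1_min] := ex_minnP P_k.
have {}k1_const x : iter k1 g x = a1 by apply/eqP.
have k1_gt1 : 1 < k1.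
  case: k1 k1_const k1_min => [|[|k1]] k1_const _ //.
    have [b1 [b2 gb]] := nonT_two_values Tg.
    by case: gb; rewrite [b1](k1_const b1) [b2](k1_const b2).
  by case: Tg; right; exists a1; apply: functional_extensionality.
exists k1.-1; split; last first.
  exists (iter k1.-2 g a1) => x.
  by rewrite -iterD -(k1_const x) -iterD; congr iter; lia.
case=> [E|[d E]].
  case: Tg; right; exists a1; apply: functional_extensionality => x.
  rewrite -(k1_const x) -[k1](prednK (ltnW k1_gt1)) iterS.
  by rewrite (congr1 (fun h => h x) E).
have : P k1.-1.
  apply/existsP; exists d; apply/forallP => x.
  by rewrite (congr1 (fun h => h x) E).
by move/k1_min; lia.
Qed.

Section CyclePositions.
Variables (A : finType) (h : A -> A) (p : nat) (x0 : A).
Hypothesis p_prime : prime p.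
Hypothesis hp : forall x, iter p h x = x.
Hypothesis hx0 : h x0 <> x0.

Let p_gt0 : 0 < p := prime_gt0 p_prime.

Definition cycle_pos x := index x (mkseq (fun i => iter i h x0) p).

Lemma iter_cycle_inj i j : i < p -> j < p -> iter i h x0 = iter j h x0 -> i = j.
Proof.
wlog le_ij : i j / i <= j.
  move=> W ip jp E; case: (leqP i j) => [|/ltnW] le; first exact: W.
  by apply/esym/W.
move=> ip jp E.
have /esym/(iter_order_inj p_prime hp) x0_ji :
    iter i h x0 = iter i h (iter (j - i) h x0) by rewrite -iterD subnKC.
have /(order_dvd_of_moved p_prime hp hx0) : iter (j - i) h x0 = x0 by [].
have [/eqP|ji_gt0] := posnP (j - i).
  by rewrite subn_eq0 => ji _; apply/eqP; rewrite eqn_leq le_ij ji.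
by move/(dvdn_leq ji_gt0); rewrite leqNgt (leq_ltn_trans (leq_subr _ _) jp).
Qed.

Lemma cycle_pos_iter k : cycle_pos (iter k h x0) = k %% p.
Proof.
have kp : k %% p < p by rewrite ltn_mod.
rewrite (iter_mod_order hp) /cycle_pos.
have -> : iter (k %% p) h x0 = nth x0 (mkseq (fun i => iter i h x0) p) (k %% p).
  by rewrite nth_mkseq.
rewrite index_uniq ?size_mkseq //.
by apply/mkseq_uniqP => i j ip jp; apply: iter_cycle_inj.
Qed.

Lemma iter_cycle_pos x : in_orbit h x0 x -> iter (cycle_pos x) h x0 = x.
Proof. by move=> [k <-]; rewrite cycle_pos_iter -iter_mod_order. Qed.

Lemma cycle_pos_lt x : in_orbit h x0 x -> cycle_pos x < p.
Proof. by move=> [k <-]; rewrite cycle_pos_iter ltn_mod. Qed.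

End CyclePositions.

Section SingleCycle.
Variables (A : finType) (M : mset A).
Hypotheses (M_monoid : monoid M) (M_Cst : subm (@Cst A) M).
Hypothesis M_diagonal : diagonal_closed M.
Variables (h : A -> A) (p : nat) (x0 : A).
Hypothesis Mh : M h.
Hypothesis p_prime : prime p.
Hypothesis hp : forall x, iter p h x = x.
Hypothesis hx0 : h x0 <> x0.
Hypothesis one_cycle : forall z, h z <> z -> in_orbit h x0 z.
Hypothesis one_fixpoint : forall u v, h u = u -> h v = v -> u = v.

Local Notation pos := (cycle_pos h p x0).

(* [x |-> h^(m.+1 * pos x) x] is the diagonal of
   [K x y = h^(pos x) (h^(m * pos y) y)] (and [K x y = x] at the fixed point),
   whose columns are constants or powers of [h]. *)
Lemma cycle_power_in m : M (fun x => iter (m * pos x) h x).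
Proof.
have M_iter k : M (iter k h) := monoid_iter k M_monoid Mh.
elim: m => [|m IH]; first by case: M_monoid.
pose K x y := if h x == x then x else iter (pos x) h y.
have -> : (fun x => iter (m.+1 * pos x) h x) = (fun x => K x (iter (m * pos x) h x)).
  apply: functional_extensionality => x; rewrite /K.
  by case: eqP => [hx|_]; [rewrite !iter_fix|rewrite -iterD mulSn].
apply: (M_diagonal (K := fun x y => K x (iter (m * pos y) h y))) => [a|b].
  apply: (proj2 M_monoid (fun y => K a y)) => //.
  by rewrite /K; case: eqP => _; [apply: M_Cst; exists a|].
rewrite /K; set y := iter (m * pos b) h b.
have [hb|nb] := classic (h y = y).
  apply: M_Cst; exists y; apply: functional_extensionality => x.
  by case: eqP => [hx|_]; [apply: one_fixpoint|apply: iter_fix].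
have [k Ek] := one_cycle nb.
have -> : (fun x => if h x == x then x else iter (pos x) h y) = iter k h.
  apply: functional_extensionality => x.
  case: eqP => [hx|/one_cycle/(iter_cycle_pos p_prime hp hx0) Ex].
    by rewrite iter_fix.
  by rewrite -Ek -{2}Ex -!iterD addnC.
exact: M_iter.
Qed.

Lemma cycle_power_moved m x : h x <> x ->
  iter (m * pos x) h x = iter (m.+1 * pos x) h x0.
Proof.
move/one_cycle/(iter_cycle_pos p_prime hp hx0) => Ex.
by rewrite -{2}Ex -iterD mulSn addnC.
Qed.

Let pt k := iter k h x0.

Let pt_neq a b : a < p -> b < p -> a <> b -> pt a <> pt b.
Proof. by move=> ap bp nab /(iter_cycle_inj p_prime hp hx0 ap bp). Qed.

Let pt_mod a b : a %% p = b %% p -> pt a = pt b.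
Proof. by rewrite /pt (iter_mod_order hp a) (iter_mod_order hp b) => ->. Qed.

Lemma single_cycle_fixpoint_good u : h u = u -> contains_good M.
Proof.
move=> hu; pose e x := iter (p.-1 * pos x) h x.
have e_fix x : h x = x -> e x = x by move=> hx; rewrite /e iter_fix.
have e_moved x : h x <> x -> e x = x0.
  move=> hx; rewrite /e cycle_power_moved // prednK ?prime_gt0 //.
  by rewrite mulnC iter_mul_order.
have hhx0 : h (h x0) <> h x0 by move/(iter_order_inj p_prime hp (n := 1)).
exists e; split; first exact: cycle_power_in.
split; last first.
  left; apply: functional_extensionality => x /=.
  have [hx|hx] := classic (h x = x); first by rewrite !e_fix.
  by rewrite (e_moved x hx) e_moved.
case=> [E|[d E]].
  by move: (congr1 (fun g => g (h x0)) E); rewrite /= e_moved // => /esym /hx0.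
have := congr1 (fun g => g u) E; have := congr1 (fun g => g x0) E => /=.
rewrite (e_fix u hu) (e_moved x0 hx0) => x0d ud.
by apply: hx0; rewrite x0d -ud hu.
Qed.

Hypothesis no_fixpoint : forall x, h x <> x.

Let pt_pos x : pt (pos x) = x.
Proof. exact/(iter_cycle_pos p_prime hp hx0)/one_cycle/no_fixpoint. Qed.

Let pt_pos_lt x : pos x < p.
Proof. exact/(cycle_pos_lt p_prime hp hx0)/one_cycle/no_fixpoint. Qed.

Let cycle_power_pt m k : iter (m * pos (pt k)) h (pt k) = pt (m.+1 * k).
Proof.
rewrite cycle_power_moved ?cycle_pos_iter //; apply: pt_mod.
by rewrite modnMmr.
Qed.

Lemma card_le_cycle_order : #|A| <= p.
Proof.
rewrite -(size_mkseq (fun k => pt k) p); apply: leq_trans (card_size _).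
apply/subset_leq_card/subsetP => x _; rewrite -(pt_pos x).
by apply/mapP; exists (pos x); rewrite // mem_iota add0n pt_pos_lt.
Qed.

Lemma single_cycle_order3_good : p = 3 -> contains_good M.
Proof.
move=> p3; have cover x : x = pt 1 \/ x = pt 2 \/ x = pt 0.
  by rewrite -(pt_pos x); move: (pos x) (pt_pos_lt x); rewrite p3 => -[|[|[|]]]; auto.
have pt_neq' a b : a < 3 -> b < 3 -> a <> b -> pt a <> pt b.
  by rewrite -p3; apply: pt_neq.
apply: (idempotent_of_three_points M_monoid M_Cst M_diagonal (a := pt 1) (b := pt 2)
  (c := pt 0) (s := fun x => iter (1 * pos x) h x)) cover _ _ _ _ => //;
  try by [apply: pt_neq' | apply: cycle_power_in | rewrite cycle_power_pt].
by rewrite cycle_power_pt; left; apply: pt_mod; rewrite p3.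
Qed.

(* For [p >= 5] the reflection [pt k |-> pt (- k)] is an involution of [A]
   with the two 2-cycles {pt 1, pt (p - 1)} and {pt 2, pt (p - 2)}. *)
Lemma single_cycle_reflection_good : 4 < p -> contains_good M.
Proof.
move=> p_gt4; pose r x := iter (p.-2 * pos x) h x.
have r_pt k : r (pt k) = pt (p.-1 * k) by rewrite /r cycle_power_pt prednK //; lia.
have rK x : r (r x) = x.
  rewrite -(pt_pos x) !r_pt; apply: pt_mod.
  have -> : p.-1 * (p.-1 * pos x) = (p.-2 * pos x) * p + pos x by nia.
  by rewrite modnMDl.
have r1 : r (pt 1) = pt p.-1 by rewrite r_pt muln1.
have r2 : r (pt 2) = pt (p - 2).
  rewrite r_pt; apply: pt_mod.
  have -> : p.-1 * 2 = p + (p - 2) by lia.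
  by rewrite modnDl.
have r1_orbit k : iter k r (pt 1) = pt 1 \/ iter k r (pt 1) = pt p.-1.
  elim: k => [|k [IH|IH]]; first by left.
    by right; rewrite iterS IH.
  by left; rewrite iterS IH -r1 rK.
have pt_neq' a b : a < p -> b < p -> a != b -> pt a <> pt b.
  by move=> ap bp /eqP; apply: pt_neq.
exists r; split; first exact: cycle_power_in.
split.
  case=> [E|[d E]].
    have : r (pt 1) = pt 1 := congr1 (fun g => g (pt 1)) E.
    by rewrite r1; apply: pt_neq'; lia.
  have : r (pt 1) = r (pt 0) by rewrite (congr1 (fun g => g (pt 1)) E) E.
  by rewrite r1 r_pt muln0; apply: pt_neq'; lia.
right; right; exists 2; split => //; split.
  by apply: functional_extensionality; apply: rK.
right; exists (pt 1), (pt 2); split; last split.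
- by split; [apply: rK|move=> k /andP [k_gt0 k_lt2]; have -> : k = 1 by lia];
    rewrite [iter 1 r _]/= r1; apply: pt_neq'; lia.
- by split; [apply: rK|move=> k /andP [k_gt0 k_lt2]; have -> : k = 1 by lia];
    rewrite [iter 1 r _]/= r2; apply: pt_neq'; lia.
- by move=> k; case: (r1_orbit k) => ->; apply: pt_neq'; lia.
Qed.

End SingleCycle.

Section FindGood.
Variables (A : finType) (M : mset A).
Hypotheses (M_monoid : monoid M) (M_Cst : subm (@Cst A) M).
Hypothesis M_diagonal : diagonal_closed M.

Lemma contains_good_sq_const h c : M h -> ~ Tset h -> (forall x, h (h x) = c) ->
  contains_good M.
Proof.
move=> Mh Th hK; have [A4|A3] := leqP 4 #|A|.
  exists h; do !split => //; right; left; split => //.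
  by exists c; apply: functional_extensionality.
have [a ha] : exists a, h a <> c.
  apply: NNPP => h_c; apply: Th; right; exists c; apply: functional_extensionality => x.
  by apply: NNPP => hx; apply: h_c; exists x.
have hc := sq_const_fixpoint hK.
have na_ha : a <> h a by move=> E; apply: ha; rewrite {1}E hK.
have na_c : a <> c by move=> E; apply: ha; rewrite E hc.
apply: (idempotent_of_three_points M_monoid M_Cst M_diagonal na_ha na_c ha
  (card_le3_cover A3 na_ha na_c ha) Mh) => //.
by right.
Qed.

Lemma contains_good_prime_order h p x0 : 3 <= #|A| -> M h -> prime p ->
  (forall x, iter p h x = x) -> h x0 <> x0 -> contains_good M.
Proof.
move=> A3 Mh p_prime hp hx0.
have Th := nonT_of_moved p_prime hp hx0.
have h_good : cond_III' h -> contains_good M.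
  by move=> III; exists h; do !split => //; right; right.
have hp' : iter p h = (fun x => x) by apply: functional_extensionality.
have [fix2|one_fix] := classic (exists u v, u <> v /\ h u = u /\ h v = v).
  by apply: h_good; exists p; do !split => //; left.
have [cyc2|one_cyc] := classic (exists x y, on_cycle h p x /\ on_cycle h p y /\
                                             forall k, iter k h x <> y).
  by apply: h_good; exists p; do !split => //; right.
have {}one_fix u v : h u = u -> h v = v -> u = v.
  by move=> hu hv; apply: NNPP => nuv; apply: one_fix; exists u, v.
have {}one_cyc z : h z <> z -> in_orbit h x0 z.
  move=> hz; apply: NNPP => nz; apply: one_cyc; exists x0, z.
  split; [exact: on_cycle_of_moved|split; first exact: on_cycle_of_moved].
  by move=> k xz; apply: nz; exists k.
have [[u hu]|no_fix] := classic (exists u, h u = u).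
  exact: (single_cycle_fixpoint_good M_monoid M_Cst M_diagonal Mh p_prime hp hx0
    one_cyc one_fix hu).
have {}no_fix x : h x <> x by move=> hx; apply: no_fix; exists x.
have := leq_trans A3 (card_le_cycle_order p_prime hp hx0 one_cyc no_fix).
rewrite leq_eqVlt => /orP [/eqP p3|p_gt3].
  exact: (single_cycle_order3_good M_monoid M_Cst M_diagonal Mh p_prime hp hx0
    one_cyc one_fix no_fix (esym p3)).
apply: (single_cycle_reflection_good M_monoid M_Cst M_diagonal Mh p_prime hp hx0
  one_cyc one_fix no_fix).
have p_neq4 : p != 4 by apply: contraTneq p_prime => ->.
lia.
Qed.

Lemma contains_good_of_periodic g k : 3 <= #|A| -> M g -> ~ Tset g -> 0 < k ->
  (forall x, iter k g x = x) -> contains_good M.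
Proof.
move=> A3 Mg Tg k_gt0 gk.
pose P n := (0 < n) && [forall x, iter n g x == x].
have P_k : exists n, P n by exists k; rewrite /P k_gt0; apply/forallP => x; rewrite gk.
have [k1 /andP [k1_gt0 /forallP g_k1] k1_min] := ex_minnP P_k.
have {}g_k1 x : iter k1 g x = x by apply/eqP.
have k1_gt1 : 1 < k1.
  case: k1 k1_gt0 g_k1 {k1_min} => [|[|//]] // _ g1.
  by case: Tg; left; apply: functional_extensionality.
pose p := pdiv k1; have p_prime : prime p by apply: pdiv_prime.
pose h := iter (k1 %/ p) g.
have hp x : iter p h x = x.
  by rewrite /h -iterM mulnC divnK ?g_k1 // pdiv_dvd.
have [x0 hx0] : exists x0, h x0 <> x0.
  apply: NNPP => h_id; have : P (k1 %/ p).
    rewrite /P divn_gt0 ?pdiv_gt0 ?pdiv_leq 1?ltnW //=.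
    by apply/forallP => x; apply/eqP; apply: NNPP => hx; apply: h_id; exists x.
  by move/k1_min; rewrite leqNgt ltn_Pdiv // prime_gt1.
exact: (contains_good_prime_order A3 (monoid_iter _ M_monoid Mg) p_prime hp hx0).
Qed.

Lemma contains_good_of_nonT g : 3 <= #|A| -> M g -> ~ Tset g -> contains_good M.
Proof.
move=> A3 Mg Tg; have [k [k_gt0 gk]] := exists_idempotent_iter g.
have [[E|[a E]]|Tgk] := classic (Tset (iter k g)).
- by apply: (contains_good_of_periodic A3 Mg Tg k_gt0) => x; rewrite E.
- have [m [Tm [c hc]]] := nonT_sq_const_iter Tg (fun x => congr1 (fun f => f x) E).
  exact: (contains_good_sq_const (monoid_iter m M_monoid Mg) Tm hc).
- exists (iter k g); split; first exact: monoid_iter.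
  by split=> //; left; apply: functional_extensionality => x; apply: gk.
Qed.

End FindGood.

Section Minimality.
Variable A : finType.
Implicit Types (f g : A -> A) (M N : mset A).

Lemma Mf_generated f g N : good f -> monoid N -> subm (@Cst A) N ->
  Mf f g -> ~ Tset g -> N g -> subm (Mf f) N.
Proof.
move=> good_f N_monoid N_Cst Mg Tg Ng; apply: Mf_sub => //.
by have [k ->] := good_iter_of_Mf good_f Mg Tg; apply: monoid_iter.
Qed.

Lemma Tset_psubm_Mf f : ~ Tset f -> psubm (@Tset A) (Mf f).
Proof. by move=> Tf; split; [exact: Tset_Mf|exists f; split; first exact: Mf_iter 1]. Qed.

Lemma minimal_u_closed_Mf f : good f -> ~ Tset f -> minimal_u_closed (Mf f).
Proof.
move=> good_f Tf; split; first exact: Mf_monoid.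
split; first exact: u_closed_good.
split; first exact: Tset_psubm_Mf.
move=> N N_monoid N_u [NMf [g [Mg Ng]]] h; have N_Cst := u_closed_Cst N_u.
split=> [Nh|[->|/N_Cst //]]; last by case: N_monoid.
apply: NNPP => Th; apply: Ng.
exact: (Mf_generated good_f N_monoid N_Cst (NMf _ Nh) Th Nh).
Qed.

Lemma C_minimal_Mf f : good f -> ~ Tset f -> C_minimal (Mf f).
Proof.
move=> good_f Tf; split; first exact: Mf_monoid.
split; first exact: Tset_psubm_Mf.
move=> [N [N_monoid [[TN [g [Ng Tg]]] [NMf [h [Mh Nh]]]]]].
apply: Nh; apply: (Mf_generated good_f N_monoid _ (NMf _ Ng) Tg Ng Mh).
by move=> e Ce; apply: TN; right.
Qed.

Lemma minimal_u_closed_good M : 3 <= #|A| -> minimal_u_closed M ->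
  exists f, ~ Tset f /\ good f /\ eqm M (Mf f).
Proof.
move=> A3 [M_monoid [M_u [[TM [g [Mg Tg]]] M_min]]].
have M_Cst := u_closed_Cst M_u.
have [a _] := nonT_two_values Tg.
have [f [Mf' [Tf good_f]]] := contains_good_of_nonT M_monoid M_Cst
  (u_closed_diagonal_closed a M_u) A3 Mg Tg.
have MfM : subm (Mf f) M := Mf_sub M_monoid M_Cst Mf'.
exists f; split=> //; split=> // h; split=> [Mh|]; last exact: MfM.
apply: NNPP => nMf.
have psub : psubm (Mf f) M by split=> //; exists h.
have Mf_T := M_min (Mf f) (Mf_monoid f) (u_closed_good good_f Tf) psub.
exact: Tf ((Mf_T f).1 (Mf_iter f 1)).
Qed.

End Minimality.

Theorem theorem5p3 (A : finType) (hA : 3 <= #|A|) :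
  (forall M : mset A,
     minimal_u_closed M <->
     exists f : A -> A, ~ Tset f /\
       (cond_I f \/ cond_II' f \/ cond_III' f) /\ eqm M (Mf f)) /\
  (forall M : mset A, minimal_u_closed M -> C_minimal M).
Proof.
have minimal_iff (M : mset A) : minimal_u_closed M <->
    exists f, ~ Tset f /\ good f /\ eqm M (Mf f).
  split; first exact: minimal_u_closed_good hA.
  by move=> [f [Tf [good_f /eqm_eq ->]]]; apply: minimal_u_closed_Mf.
split; first exact: minimal_iff.
move=> M /minimal_iff [f [Tf [good_f /eqm_eq ->]]].
exact: C_minimal_Mf.
Qed.
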